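(* Every $3$-CET with exactly one flip has a periodic point. Consequently there is no transitive $3$-CET with exactly one flip.
   Context: Let $S^1=[0,1]/(0\sim 1)$ with the orientation induced by $[0,1]$. Let $I_1,\dots,I_n$ be pairwise disjoint open subintervals of $S^1$ whose closures cover $S^1$. An $n$-CET is an injective map $T:\bigcup_{i=1}^n I_i\to S^1$ which is an isometry on each $I_i$ and which cannot be continuously extended to a larger open subset of $S^1$ (so it has exactly $n$ discontinuity points). A flip is a subinterval $I_i$ on which $T$ reverses orientation. A periodic point is $p$ with $T^m(p)=p$ for some $m\ge1$ (with $p\in\mathrm{Dom}(T^m)$). The orbit of $p$ is $\{T^m(p): m\in\mathbb{Z},\ p\in\mathrm{Dom}(T^m)\}$ and $T$ is transitive if some orbit is dense in $S^1$. *)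

From Stdlib Require Import Reals Lra Lia.
Open Scope R_scope.

(** The circle S^1 = [0,1]/(0~1) is represented by the reals in [0,1). *)
Definition in_S1 (x : R) : Prop := 0 <= x < 1.

Definition modone (x : R) : R := frac_part x.

Definition cdist (x y : R) : R := Rmin (frac_part (x - y)) (frac_part (y - x)).

Definition arc (a l : R) (x : R) : Prop :=
  exists t, 0 < t < l /\ x = modone (a + t).

Definition carc (a l : R) (x : R) : Prop :=
  exists t, 0 <= t <= l /\ x = modone (a + t).

Definition S1_open (U : R -> Prop) : Prop :=
  (forall x, U x -> in_S1 x) /\
  (forall x, U x -> exists d, 0 < d /\ forall y, in_S1 y -> cdist x y < d -> U y).

Definition S1_continuous_on (U : R -> Prop) (g : R -> R) : Prop :=
  forall x, U x -> forall e, 0 < e -> exists d, 0 < d /\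
    forall y, U y -> cdist x y < d -> cdist (g x) (g y) < e.

Definition not_extendable (D : R -> Prop) (T : R -> R) : Prop :=
  ~ (exists (U : R -> Prop) (g : R -> R),
       S1_open U /\ (forall x, D x -> U x) /\ (exists x, U x /\ ~ D x) /\
       (forall x, U x -> in_S1 (g x)) /\ (forall x, D x -> g x = T x) /\
       S1_continuous_on U g).

Definition CET_pieces (n : nat) (a l : nat -> R) (D : R -> Prop) (T : R -> R) : Prop :=
  (forall i, (i < n)%nat -> in_S1 (a i) /\ 0 < l i <= 1) /\
  (forall i j x, (i < n)%nat -> (j < n)%nat -> i <> j ->
      arc (a i) (l i) x -> arc (a j) (l j) x -> False) /\
  (forall x, in_S1 x -> exists i, (i < n)%nat /\ carc (a i) (l i) x) /\
  (forall x, D x <-> exists i, (i < n)%nat /\ arc (a i) (l i) x) /\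
  (forall x, D x -> in_S1 (T x)) /\
  (forall x y, D x -> D y -> T x = T y -> x = y) /\
  (forall i x y, (i < n)%nat -> arc (a i) (l i) x -> arc (a i) (l i) y ->
      cdist (T x) (T y) = cdist x y) /\
  not_extendable D T.

(** The piece arc a l is a flip: T reverses orientation on it, i.e. T acts
    on it as a reflection t |-> c - t of S^1. *)
Definition is_flip (a l : R) (T : R -> R) : Prop :=
  exists c, forall t, 0 < t < l -> T (modone (a + t)) = modone (c - t).

Definition CET_one_flip (n : nat) (D : R -> Prop) (T : R -> R) : Prop :=
  exists a l : nat -> R, CET_pieces n a l D T /\
    exists j, (j < n)%nat /\ is_flip (a j) (l j) T /\
      forall i, (i < n)%nat -> is_flip (a i) (l i) T -> i = j.

Definition in_dom_iter (D : R -> Prop) (T : R -> R) (m : nat) (p : R) : Prop :=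
  forall k, (k < m)%nat -> D (Nat.iter k T p).

Definition has_periodic_point (D : R -> Prop) (T : R -> R) : Prop :=
  exists p m, (1 <= m)%nat /\ in_dom_iter D T m p /\ Nat.iter m T p = p.

Definition in_orbit (D : R -> Prop) (T : R -> R) (p q : R) : Prop :=
  exists m, (in_dom_iter D T m p /\ q = Nat.iter m T p) \/
            (in_dom_iter D T m q /\ Nat.iter m T q = p).

Definition transitive (D : R -> Prop) (T : R -> R) : Prop :=
  exists p, in_S1 p /\
    forall x e, in_S1 x -> 0 < e -> exists q, in_orbit D T p q /\ cdist x q < e.

(* Up to a rotation of the circle, a 3-CET with one flip is the model map
   [one_flip_map]: two arcs of total length [b] are exchanged and rotated, and
   the remaining arc, of length [c - b], is flipped.  Its first return map to
   [[0, b)] is again such a map, on a circle shorter by the flip length, so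
   finitely many steps of this Rauzy induction lead to a map whose flipped arc
   meets its own image; there the flip has points of period 2, which lift back
   to a periodic orbit avoiding the discontinuities.  The map is a local
   isometry along this orbit, so a whole ball around it consists of periodic
   points, and a dense orbit would have to enter the ball and hence be finite. *)

From Stdlib Require Import Reals Lra Lia List Classical.
Import ListNotations.
Open Scope R_scope.

(** * Arithmetic modulo 1 *)

Definition eqm (x y : R) : Prop := exists z : Z, x = y + IZR z.

Lemma eqm_refl x : eqm x x.
Proof. exists 0%Z. simpl. lra. Qed.

Lemma eqm_sym x y : eqm x y -> eqm y x.
Proof. intros [z H]. exists (-z)%Z. rewrite opp_IZR. lra. Qed.

Lemma eqm_trans x y w : eqm x y -> eqm y w -> eqm x w.
Proof. intros [z H] [z' H']. exists (z + z')%Z. rewrite plus_IZR. lra. Qed.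

Lemma eqm_add x y u v : eqm x y -> eqm u v -> eqm (x + u) (y + v).
Proof. intros [z H] [z' H']. exists (z + z')%Z. rewrite plus_IZR. lra. Qed.

Lemma eqm_opp x y : eqm x y -> eqm (- x) (- y).
Proof. intros [z H]. exists (-z)%Z. rewrite opp_IZR. lra. Qed.

Lemma eqm_shift x y d : eqm x y -> eqm (x + d) (y + d).
Proof. intros H. apply eqm_add; auto using eqm_refl. Qed.

Lemma eqm_of_eq x y : x = y -> eqm x y.
Proof. intros ->. apply eqm_refl. Qed.

Definition IsInt (r : R) : Prop := exists z, r = IZR z.

Lemma IsInt_IZR z : IsInt (IZR z). Proof. exists z; auto. Qed.
Lemma IsInt_add a b : IsInt a -> IsInt b -> IsInt (a + b).
Proof. intros [z ->] [w ->]. exists (z + w)%Z. rewrite plus_IZR; auto. Qed.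
Lemma IsInt_sub a b : IsInt a -> IsInt b -> IsInt (a - b).
Proof. intros [z ->] [w ->]. exists (z - w)%Z. rewrite minus_IZR; auto. Qed.
Lemma IsInt_opp a : IsInt a -> IsInt (- a).
Proof. intros [z ->]. exists (- z)%Z. rewrite opp_IZR; auto. Qed.
Lemma IsInt_mul a b : IsInt a -> IsInt b -> IsInt (a * b).
Proof. intros [z ->] [w ->]. exists (z * w)%Z. rewrite mult_IZR; auto. Qed.
Lemma IsInt_0 : IsInt 0. Proof. exists 0%Z; auto. Qed.
Lemma IsInt_1 : IsInt 1. Proof. exists 1%Z; auto. Qed.

Lemma eqm_of_IsInt x y : IsInt (x - y) -> eqm x y.
Proof. intros [z Hz]. exists z. lra. Qed.

(* Proves [eqm x y] when [x - y] normalizes to an integer polynomial in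
   [IZR] terms. *)
Ltac solve_eqm :=
  apply eqm_of_IsInt; match goal with |- IsInt ?e => ring_simplify e end;
  repeat first [ apply IsInt_add | apply IsInt_sub | apply IsInt_opp | apply IsInt_mul
               | apply IsInt_IZR | apply IsInt_0 | apply IsInt_1 ].

Lemma IZR_eq0 (z : Z) : -1 < IZR z < 1 -> z = 0%Z.
Proof.
  intros [H1 H2]. apply lt_IZR in H2. replace (-1) with (IZR (-1)) in H1 by (simpl; lra).
  apply lt_IZR in H1. lia.
Qed.

Lemma eqm_near x y : -1 < x - y < 1 -> eqm x y -> x = y.
Proof. intros Hd [z H]. assert (z = 0%Z) by (apply IZR_eq0; lra). subst z. simpl in H. lra. Qed.

Lemma eqm_unique x y : 0 <= x < 1 -> 0 <= y < 1 -> eqm x y -> x = y.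
Proof. intros Hx Hy. apply eqm_near. lra. Qed.

Lemma modone_range x : 0 <= modone x < 1.
Proof. unfold modone. destruct (base_fp x). lra. Qed.

Lemma modone_eqm x : eqm (modone x) x.
Proof. unfold modone, frac_part. exists (- Int_part x)%Z. rewrite opp_IZR. lra. Qed.

Lemma modone_eqm_eq x y : eqm x y -> modone x = modone y.
Proof.
  intros H. apply eqm_unique; try apply modone_range.
  eapply eqm_trans; [apply modone_eqm|]. eapply eqm_trans; [apply H|]. apply eqm_sym, modone_eqm.
Qed.

Lemma modone_id x : 0 <= x < 1 -> modone x = x.
Proof. intros H. apply eqm_unique; auto using modone_range, modone_eqm. Qed.

Lemma eqm_of_modone u1 u2 e : u1 + modone (u2 - u1) = e -> eqm u2 e.
Proof. intros <-. destruct (modone_eqm (u2 - u1)) as [z Hz]. exists (-z)%Z. rewrite opp_IZR. lra. Qed.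

Lemma frac_part_opp_sum x :
  frac_part x + frac_part (- x) = 0 \/ frac_part x + frac_part (- x) = 1.
Proof.
  pose proof (modone_eqm x) as [z1 H1]. pose proof (modone_eqm (-x)) as [z2 H2].
  unfold modone in *. destruct (base_fp x), (base_fp (-x)).
  assert (E : frac_part x + frac_part (-x) = IZR (z1 + z2)) by (rewrite plus_IZR; lra).
  destruct (Rlt_dec (IZR (z1 + z2)) 1).
  - left. rewrite E. replace (z1 + z2)%Z with 0%Z; [reflexivity|]. symmetry. apply IZR_eq0. lra.
  - right. rewrite E. assert (z1 + z2 - 1 = 0)%Z by (apply IZR_eq0; rewrite minus_IZR; simpl; lra).
    replace (z1 + z2)%Z with 1%Z by lia. reflexivity.
Qed.

Lemma cdist_eq u v w z :
  cdist u v = cdist w z -> eqm (u - v) (w - z) \/ eqm (u - v) (z - w).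
Proof.
  unfold cdist. intros H.
  assert (S1 := frac_part_opp_sum (u - v)). assert (S2 := frac_part_opp_sum (w - z)).
  replace (- (u - v)) with (v - u) in S1 by ring. replace (- (w - z)) with (z - w) in S2 by ring.
  assert (E1 := modone_eqm (u - v)). assert (E2 := modone_eqm (w - z)). assert (E3 := modone_eqm (z - w)).
  unfold modone in *.
  destruct (base_fp (u - v)), (base_fp (v - u)), (base_fp (w - z)), (base_fp (z - w)).
  assert (HH : frac_part (u - v) = frac_part (w - z) \/ frac_part (u - v) = frac_part (z - w)).
  { revert H. unfold Rmin. destruct (Rle_dec (frac_part (u - v)) (frac_part (v - u)));
    destruct (Rle_dec (frac_part (w - z)) (frac_part (z - w))); intros H;
    destruct S1, S2; first [left; lra | right; lra]. }
  destruct HH as [HH|HH]; [left|right]; rewrite HH in E1; apply eqm_sym in E1;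
    eapply eqm_trans; eauto.
Qed.

Lemma cdist_lt u v e : cdist u v < e -> exists d, Rabs d < e /\ eqm v (u + d).
Proof.
  unfold cdist, Rmin. intros H.
  assert (S1 := frac_part_opp_sum (v - u)). replace (- (v - u)) with (u - v) in S1 by ring.
  destruct (modone_eqm (v - u)) as [z Hz]. unfold modone in Hz.
  destruct (base_fp (u - v)), (base_fp (v - u)).
  destruct (Rle_dec (frac_part (u - v)) (frac_part (v - u))); [destruct S1|].
  - exists (frac_part (v - u)). split; [rewrite Rabs_right; lra|].
    exists (- z)%Z. rewrite opp_IZR. lra.
  - exists (frac_part (v - u) - 1). split; [rewrite Rabs_left1; lra|].
    exists (- z + 1)%Z. rewrite plus_IZR, opp_IZR. simpl. lra.
  - exists (frac_part (v - u)). split; [rewrite Rabs_right; lra|].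
    exists (- z)%Z. rewrite opp_IZR. lra.
Qed.

Lemma cdist_pos u v : in_S1 u -> in_S1 v -> u <> v -> 0 < cdist u v.
Proof.
  unfold in_S1. intros Hu Hv Hne. unfold cdist.
  destruct (modone_eqm (v - u)) as [z1 E1]. destruct (modone_eqm (u - v)) as [z2 E2].
  unfold modone in *. destruct (base_fp (u - v)), (base_fp (v - u)).
  assert (frac_part (u - v) <> 0).
  { intros Hz0. apply Hne. apply eqm_near; [lra|]. exists (- z2)%Z. rewrite opp_IZR. lra. }
  assert (frac_part (v - u) <> 0).
  { intros Hz0. apply Hne. apply eqm_near; [lra|]. exists z1. lra. }
  unfold Rmin. destruct Rle_dec; lra.
Qed.

(** * Arcs of the circle *)

Lemma arc_in_S1 a l x : arc a l x -> in_S1 x.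
Proof. intros [t [_ ->]]. apply modone_range. Qed.

Lemma arc_of a l x t : 0 < t < l -> eqm x (a + t) -> arc a l (modone x).
Proof. intros Ht E. exists t. split; auto. apply modone_eqm_eq. auto. Qed.

Lemma carc_offset u1 u l d m : l <= 1 -> 0 <= d < 1 -> 0 < m < 1 ->
  eqm u (u1 + d) -> carc u l (modone (u1 + m)) -> d <= m <= d + l \/ m + 1 <= d + l.
Proof.
  intros Hl Hd Hm [zu Hu] [t [Ht E]].
  assert (Et : eqm (u1 + d + t) (u1 + m)).
  { apply eqm_trans with (u + t); [exists (- zu)%Z; rewrite opp_IZR; lra|].
    apply eqm_trans with (modone (u + t)); [apply eqm_sym, modone_eqm|].
    rewrite <- E. apply modone_eqm. }
  destruct Et as [z Hz].
  assert (Hz01 : (-1 < z < 2)%Z) by (split; apply lt_IZR; simpl; lra).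
  destruct (Z.eq_dec z 0) as [->|Hz0]; [left; simpl in Hz; lra|].
  replace z with 1%Z in Hz by lia. simpl in Hz. right. lra.
Qed.

Definition arcs_disjoint (u1 l1 u2 l2 : R) : Prop :=
  forall x, arc u1 l1 x -> arc u2 l2 x -> False.

Lemma arcs_disjoint_sym u1 l1 u2 l2 : arcs_disjoint u1 l1 u2 l2 -> arcs_disjoint u2 l2 u1 l1.
Proof. intros H x A B. eapply H; eauto. Qed.

Lemma arcs_disjoint_gap_l u1 l1 u2 l2 : 0 < l2 -> arcs_disjoint u1 l1 u2 l2 ->
  l1 <= modone (u2 - u1).
Proof.
  intros H2 Hd. set (d := modone (u2 - u1)).
  assert (Hd0 := modone_range (u2 - u1)). fold d in Hd0.
  assert (Ed : eqm d (u2 - u1)) by apply modone_eqm.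
  destruct (Rle_dec l1 d) as [|Hlt]; auto. exfalso.
  set (ep := Rmin l2 (l1 - d) / 2).
  assert (0 < ep /\ ep < l2 /\ ep < l1 - d).
  { unfold ep. assert (Hm1 := Rmin_l l2 (l1 - d)). assert (Hm2 := Rmin_r l2 (l1 - d)).
    assert (0 < Rmin l2 (l1 - d)) by (apply Rmin_glb_lt; lra). lra. }
  apply (Hd (modone (u2 + ep))).
  - apply arc_of with (d + ep); [lra|].
    destruct Ed as [z Hz]. exists (- z)%Z. rewrite opp_IZR. lra.
  - apply arc_of with ep; [lra | apply eqm_refl].
Qed.

Lemma arcs_disjoint_gap u1 l1 u2 l2 : 0 < l1 -> 0 < l2 -> arcs_disjoint u1 l1 u2 l2 ->
  l1 <= modone (u2 - u1) <= 1 - l2.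
Proof.
  intros H1 H2 Hd.
  assert (G1 := arcs_disjoint_gap_l _ _ _ _ H2 Hd).
  assert (G2 := arcs_disjoint_gap_l _ _ _ _ H1 (arcs_disjoint_sym _ _ _ _ Hd)).
  assert (S := frac_part_opp_sum (u2 - u1)). replace (- (u2 - u1)) with (u1 - u2) in S by ring.
  unfold modone in *. destruct S; lra.
Qed.

Lemma disjoint3_ordered u1 l1 u2 l2 u3 l3 : 0 < l1 -> 0 < l2 -> 0 < l3 ->
  arcs_disjoint u1 l1 u2 l2 -> arcs_disjoint u1 l1 u3 l3 -> arcs_disjoint u2 l2 u3 l3 ->
  modone (u2 - u1) <= modone (u3 - u1) ->
  l1 <= modone (u2 - u1) /\ modone (u2 - u1) + l2 <= modone (u3 - u1) /\
  modone (u3 - u1) + l3 <= 1.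
Proof.
  intros H1 H2 H3 D12 D13 D23 Hle.
  assert (B12 := arcs_disjoint_gap _ _ _ _ H1 H2 D12).
  assert (B13 := arcs_disjoint_gap _ _ _ _ H1 H3 D13).
  assert (B23 := arcs_disjoint_gap _ _ _ _ H2 H3 D23).
  assert (E : modone (u3 - u2) = modone (u3 - u1) - modone (u2 - u1)).
  { apply eqm_unique; [apply modone_range | assert (R1 := modone_range (u3 - u1)); lra |].
    eapply eqm_trans; [apply modone_eqm|].
    eapply eqm_trans; [|apply eqm_add; [apply eqm_sym, modone_eqm | apply eqm_opp, eqm_sym, modone_eqm]].
    apply eqm_of_eq. ring. }
  lra.
Qed.

Lemma disjoint3_adjacent u1 l1 u2 l2 u3 l3 :
  0 < l1 -> 0 < l2 -> 0 < l3 -> l1 + l2 + l3 = 1 ->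
  arcs_disjoint u1 l1 u2 l2 -> arcs_disjoint u1 l1 u3 l3 -> arcs_disjoint u2 l2 u3 l3 ->
  (eqm u2 (u1 + l1) /\ eqm u3 (u1 + l1 + l2)) \/ (eqm u3 (u1 + l1) /\ eqm u2 (u1 + l1 + l3)).
Proof.
  intros H1 H2 H3 Hs D12 D13 D23.
  destruct (Rle_dec (modone (u2 - u1)) (modone (u3 - u1))).
  - left. destruct (disjoint3_ordered u1 l1 u2 l2 u3 l3) as [A [B C]]; auto.
    split; apply (eqm_of_modone u1); lra.
  - right. destruct (disjoint3_ordered u1 l1 u3 l3 u2 l2) as [A [B C]];
      auto using arcs_disjoint_sym; [lra|].
    split; apply (eqm_of_modone u1); lra.
Qed.

Definition arcs_cover3 (u1 l1 u2 l2 u3 l3 : R) : Prop :=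
  forall x, in_S1 x -> carc u1 l1 x \/ carc u2 l2 x \/ carc u3 l3 x.

Lemma cover3_ordered u1 l1 u2 l2 u3 l3 :
  0 < l1 <= 1 -> 0 < l2 <= 1 -> 0 < l3 <= 1 ->
  arcs_disjoint u1 l1 u2 l2 -> arcs_disjoint u1 l1 u3 l3 -> arcs_disjoint u2 l2 u3 l3 ->
  arcs_cover3 u1 l1 u2 l2 u3 l3 -> modone (u2 - u1) <= modone (u3 - u1) ->
  modone (u2 - u1) = l1 /\ modone (u3 - u1) = l1 + l2 /\ l1 + l2 + l3 = 1.
Proof.
  intros H1 H2 H3 D12 D13 D23 Cv Hle.
  destruct (disjoint3_ordered u1 l1 u2 l2 u3 l3) as [A [B C]]; try lra; auto.
  set (d2 := modone (u2 - u1)) in *. set (d3 := modone (u3 - u1)) in *.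
  assert (E2 : eqm u2 (u1 + d2)) by (apply (eqm_of_modone u1); reflexivity).
  assert (E3 : eqm u3 (u1 + d3)) by (apply (eqm_of_modone u1); reflexivity).
  assert (E1 : eqm u1 (u1 + 0)) by (apply eqm_of_eq; ring).
  assert (Gap : forall m, 0 < m < 1 -> l1 < m -> (m < d2 \/ d2 + l2 < m) ->
                          (m < d3 \/ d3 + l3 < m) -> False).
  { intros m Hm G1 G2 G3.
    destruct (Cv (modone (u1 + m)) (modone_range _)) as [C1|[C2|C3]].
    - destruct (carc_offset u1 u1 l1 0 m) as [O|O]; auto; lra.
    - destruct (carc_offset u1 u2 l2 d2 m) as [O|O]; try lra; auto.
    - destruct (carc_offset u1 u3 l3 d3 m) as [O|O]; try lra; auto. }
  assert (d2 = l1).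
  { destruct (Rle_dec d2 l1); [lra|]. exfalso. apply (Gap ((l1 + d2) / 2)); lra. }
  assert (d3 = d2 + l2).
  { destruct (Rle_dec d3 (d2 + l2)); [lra|]. exfalso. apply (Gap ((d2 + l2 + d3) / 2)); lra. }
  assert (d3 + l3 = 1).
  { destruct (Rle_dec 1 (d3 + l3)); [lra|]. exfalso. apply (Gap ((d3 + l3 + 1) / 2)); lra. }
  lra.
Qed.

Lemma cover3_adjacent u1 l1 u2 l2 u3 l3 :
  0 < l1 <= 1 -> 0 < l2 <= 1 -> 0 < l3 <= 1 ->
  arcs_disjoint u1 l1 u2 l2 -> arcs_disjoint u1 l1 u3 l3 -> arcs_disjoint u2 l2 u3 l3 ->
  arcs_cover3 u1 l1 u2 l2 u3 l3 ->
  l1 + l2 + l3 = 1 /\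
  ((eqm u2 (u1 + l1) /\ eqm u3 (u2 + l2)) \/ (eqm u3 (u1 + l1) /\ eqm u2 (u3 + l3))).
Proof.
  intros H1 H2 H3 D12 D13 D23 Cv.
  destruct (Rle_dec (modone (u2 - u1)) (modone (u3 - u1))).
  - destruct (cover3_ordered u1 l1 u2 l2 u3 l3) as [A [B C]]; auto.
    split; [auto|]. left. split; [apply (eqm_of_modone u1); lra|].
    apply eqm_trans with (u1 + l1 + l2); [apply (eqm_of_modone u1); lra|].
    apply eqm_shift, eqm_sym, (eqm_of_modone u1); lra.
  - destruct (cover3_ordered u1 l1 u3 l3 u2 l2) as [A [B C]]; auto using arcs_disjoint_sym.
    + intros x Hx. destruct (Cv x Hx) as [?|[?|?]]; tauto.
    + lra.
    + split; [lra|]. right. split; [apply (eqm_of_modone u1); lra|].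
      apply eqm_trans with (u1 + l1 + l3); [apply (eqm_of_modone u1); lra|].
      apply eqm_shift, eqm_sym, (eqm_of_modone u1); lra.
Qed.

Section ArcIsometry.
Variables (a l : R) (T : R -> R).
Hypothesis T_S1 : forall x, arc a l x -> in_S1 (T x).
Hypothesis T_iso : forall x y, arc a l x -> arc a l y -> cdist (T x) (T y) = cdist x y.

Let g t := T (modone (a + t)).

Lemma arc_isometry_pair t1 t2 : 0 < t1 < l -> 0 < t2 < l ->
  eqm (g t1 - g t2) (t1 - t2) \/ eqm (g t1 - g t2) (t2 - t1).
Proof.
  intros H1 H2. unfold g.
  destruct (modone_eqm (a + t1)) as [z1 Hz1]; destruct (modone_eqm (a + t2)) as [z2 Hz2].
  assert (A : forall t, 0 < t < l -> arc a l (modone (a + t))) by (intros t Ht; exists t; auto).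
  destruct (cdist_eq _ _ _ _ (T_iso _ _ (A t1 H1) (A t2 H2))) as [E|E]; [left|right];
    (eapply eqm_trans; [exact E|]).
  - exists (z1 - z2)%Z; rewrite minus_IZR; lra.
  - exists (z2 - z1)%Z; rewrite minus_IZR; lra.
Qed.

Lemma arc_isometry_cases :
  (exists r, forall t, 0 < t < l -> T (modone (a + t)) = modone (a + t + r)) \/ is_flip a l T.
Proof.
  destruct (Rlt_or_le 0 l) as [Hl|Hl]; [|left; exists 0; intros; lra].
  set (t0 := l / 2). assert (H0 : 0 < t0 < l) by (unfold t0; lra).
  assert (Hdich : (forall t, 0 < t < l -> eqm (g t - g t0) (t - t0)) \/
                  (forall t, 0 < t < l -> eqm (g t - g t0) (t0 - t))).
  { apply NNPP. intros Hn. apply not_or_and in Hn. destruct Hn as [Hn1 Hn2].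
    apply not_all_ex_not in Hn1. destruct Hn1 as [t1 Hn1].
    apply not_all_ex_not in Hn2. destruct Hn2 as [t2 Hn2].
    apply imply_to_and in Hn1. apply imply_to_and in Hn2.
    destruct Hn1 as [Ht1 Hn1]. destruct Hn2 as [Ht2 Hn2].
    assert (N1 : eqm (g t1 - g t0) (t0 - t1))
      by (destruct (arc_isometry_pair t1 t0) as [E|E]; auto; contradiction).
    assert (P2 : eqm (g t2 - g t0) (t2 - t0))
      by (destruct (arc_isometry_pair t2 t0) as [E|E]; auto; contradiction).
    destruct N1 as [z1 Hz1]. destruct P2 as [z2 Hz2].
    destruct (arc_isometry_pair t2 t1 Ht2 Ht1) as [[z3 Hz3]|[z3 Hz3]].
    - apply Hn1. exists (z2 - z3)%Z. rewrite minus_IZR. lra.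
    - apply Hn2. exists (z1 + z3)%Z. rewrite plus_IZR. lra. }
  assert (Hg : forall t, 0 < t < l -> g t = modone (g t)).
  { intros t Ht. symmetry. apply modone_id, T_S1. exists t; auto. }
  destruct Hdich as [P|N].
  - left. exists (g t0 - a - t0). intros t Ht. fold (g t). rewrite (Hg t Ht).
    apply modone_eqm_eq. destruct (P t Ht) as [z Hz]. exists z. lra.
  - right. exists (g t0 + t0). intros t Ht. fold (g t). rewrite (Hg t Ht).
    apply modone_eqm_eq. destruct (N t Ht) as [z Hz]. exists z. lra.
Qed.

End ArcIsometry.

(** * The model map and its Rauzy induction *)

Ltac case_decs := repeat match goal with
  | |- context [Rlt_dec ?a ?b] => destruct (Rlt_dec a b)
  | |- context [Rle_dec ?a ?b] => destruct (Rle_dec a b)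
  end.

Definition wrap (c y : R) : R := if Rlt_dec y c then y else y - c.

(* The model 3-CET on the circle [0, c): the arc [0, b) is cut at [b - s],
   its two pieces are exchanged and then rotated by [k], and the arc [b, c)
   is flipped onto the complement of the image. *)
Definition one_flip_map (c b s k x : R) : R :=
  if Rlt_dec x (b - s) then wrap c (x + s + k)
  else if Rlt_dec x b then wrap c (x + s - b + k)
  else wrap c (k + b + c - x).

Definition admissible (c b s k : R) : Prop := 0 <= b < c /\ 0 <= s <= b /\ 0 <= k < c.

Definition regular (c b s x : R) : Prop := 0 < x < c /\ x <> b /\ x <> b - s.

Definition regular_off (c b s : R) (bad : list R) (x : R) : Prop :=
  regular c b s x /\ ~ In x bad.

Lemma one_flip_map_range c b s k x :
  admissible c b s k -> regular c b s x -> 0 <= one_flip_map c b s k x < c.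
Proof. intros [? [? ?]] [? [? ?]]. unfold one_flip_map, wrap. case_decs; lra. Qed.

Definition one_flip_preimages (c b s k z : R) : list R :=
  [z - s - k; z - s - k + c; z - s + b - k; z - s + b - k + c; k + b + c - z; k + b - z].

Lemma one_flip_preimages_spec c b s k x :
  In x (one_flip_preimages c b s k (one_flip_map c b s k x)).
Proof.
  unfold one_flip_preimages, one_flip_map, wrap. simpl.
  case_decs; first [ left; ring | right; left; ring | do 2 right; left; ring
                   | do 3 right; left; ring | do 4 right; left; ring | do 5 right; left; ring ].
Qed.

Definition reach (f : R -> R) (P : R -> Prop) (x z : R) (n : nat) : Prop :=
  (forall i, (i < n)%nat -> P (Nat.iter i f x)) /\ Nat.iter n f x = z.

Lemma reach0 f P x : reach f P x x 0.
Proof. split; [intros; lia | reflexivity]. Qed.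

Lemma reach1 f (P : R -> Prop) x : P x -> reach f P x (f x) 1.
Proof. intros H. split; [|reflexivity]. intros i Hi. replace i with 0%nat by lia. exact H. Qed.

Lemma reach_trans f P x z w n n' :
  reach f P x z n -> reach f P z w n' -> reach f P x w (n' + n).
Proof.
  intros [H1 E1] [H2 E2]. split.
  - intros i Hi. destruct (Nat.lt_ge_cases i n); auto.
    replace i with ((i - n) + n)%nat by lia. rewrite Nat.iter_add, E1. apply H2. lia.
  - rewrite Nat.iter_add, E1. auto.
Qed.

Lemma reach_cycle_lift (f g phi : R -> R) (P Q : R -> Prop) y m :
  (forall y, Q y -> exists n, (1 <= n)%nat /\ reach f P (phi y) (phi (g y)) n) ->
  (1 <= m)%nat -> reach g Q y y m ->
  exists n, (1 <= n)%nat /\ reach f P (phi y) (phi y) n.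
Proof.
  intros Hstep Hm [HQ Hret].
  assert (Hall : forall i, (i <= m)%nat ->
            exists n, (i <= n)%nat /\ reach f P (phi y) (phi (Nat.iter i g y)) n).
  { induction i as [|i IHi]; intros Hi; [exists 0%nat; split; [lia | apply reach0]|].
    destruct (IHi ltac:(lia)) as [n [Hn HR]].
    destruct (Hstep _ (HQ i ltac:(lia))) as [n' [Hn' HR']].
    exists (n' + n)%nat. split; [lia|]. eapply reach_trans; eauto. }
  destruct (Hall m (le_n _)) as [n [Hn HR]].
  exists n. split; [lia|]. rewrite Hret in HR. exact HR.
Qed.

Lemma exists_notin_between (l : list R) u v : u < v -> exists x, u < x < v /\ ~ In x l.
Proof.
  revert u v. induction l as [|a l IH]; intros u v Huv.
  - exists ((u + v) / 2). split; [lra | simpl; tauto].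
  - destruct (Rlt_dec u a) as [Ha|Ha].
    + destruct (IH u (Rmin v a)) as [x [Hx Hn]]; [apply Rmin_glb_lt; lra|].
      assert (x < v /\ x < a) by (pose proof (Rmin_l v a); pose proof (Rmin_r v a); lra).
      exists x. split; [lra|]. simpl. intros [E|E]; [lra | auto].
    + destruct (IH u v Huv) as [x [Hx Hn]]. exists x. split; auto. simpl. intros [E|E]; [lra | auto].
Qed.

(* Points of an arc that the flip maps into itself have period 2. *)
Lemma reflection_cycle c b s k bad u v :
  admissible c b s k -> b <= u -> u < v -> v <= c ->
  (exists K, forall x, u < x < v -> one_flip_map c b s k x = K - x /\ u < K - x < v) ->
  exists y m, (1 <= m)%nat /\ reach (one_flip_map c b s k) (regular_off c b s bad) y y m.
Proof.
  intros [Hb [Hs Hk]] Hu Huv Hvc [K HK].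
  destruct (exists_notin_between (bad ++ map (fun z => K - z) bad) u v Huv) as [y [Hy Hn]].
  destruct (HK y Hy) as [E Hr]. destruct (HK _ Hr) as [E' _].
  assert (Hreg : forall z, u < z < v -> regular c b s z) by (intros z Hz; repeat split; lra).
  exists y, 2%nat. split; [lia|]. split.
  - intros [|[|i]] Hi; [| |lia]; simpl; [|rewrite E]; (split; [auto|]).
    + intro; apply Hn, in_or_app; auto.
    + intros Hb'. apply Hn, in_or_app. right.
      replace y with (K - (K - y)) by ring. apply in_map. auto.
  - simpl. rewrite E, E'. ring.
Qed.

Definition wrap2 (m z : R) : R :=
  if Rlt_dec z m then z else if Rlt_dec z (2 * m) then z - m else z - 2 * m.

(* Inverse of [y |-> wrap2 b (y + th)] on [0, b). *)
Definition unshift (b th y : R) : R :=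
  if Rle_dec th y then y - th else if Rle_dec (th - b) y then y - th + b else y - th + 2 * b.

Lemma wrap2_unshift b th y : 0 <= th < 2 * b -> 0 <= y < b -> wrap2 b (unshift b th y + th) = y.
Proof. intros. unfold wrap2, unshift. case_decs; lra. Qed.

Lemma unshift_range b th y : 0 <= th < 2 * b -> 0 <= y < b -> 0 <= unshift b th y < b.
Proof. intros. unfold unshift. case_decs; lra. Qed.

Definition first_return (f : R -> R) (b x : R) : R := if Rlt_dec (f x) b then f x else f (f x).

(* The discontinuities of [one_flip_map c b s k] and the preimages of [b] and
   of [bad], carried to the induced circle. *)
Definition induced_bad (c b s k : R) (bad : list R) : list R :=
  map (fun x => wrap2 b (x + (k + s - (c - b))))
    (0 :: (b - s) :: bad ++ flat_map (one_flip_preimages c b s k) (b :: bad)).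

Section RauzyStep.
Variables (c b s k : R) (bad : list R).
Hypotheses (Hadm : admissible c b s k) (Hck : c <= k + b) (Hkb : k <= b).

Let f := one_flip_map c b s k.
Let th := k + s - (c - b).
Let f' := one_flip_map b (b - (c - b)) (b - k) (wrap2 b (2 * k + s - (c - b))).
Let rho x := wrap2 b (x + th).

Lemma induced_admissible : admissible b (b - (c - b)) (b - k) (wrap2 b (2 * k + s - (c - b))).
Proof. destruct Hadm as [? [? ?]]. unfold admissible, wrap2. case_decs; lra. Qed.

(* [f'] lives on a circle of length [b], shorter by the flip length [c - b],
   which it keeps. *)
Lemma first_return_conj y :
  regular b (b - (c - b)) (b - k) y -> regular c b s (unshift b th y) ->
  f (unshift b th y) <> b -> unshift b th (f' y) = first_return f b (unshift b th y).
Proof.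
  destruct Hadm as [Hb [Hs Hk']]. intros [Hy [Hy1 Hy2]] [Hx [Hx1 Hx2]].
  unfold f, f', th, unshift, first_return, one_flip_map, wrap, wrap2.
  revert Hx Hx1 Hx2. case_decs; intros; lra.
Qed.

Lemma induced_step y : regular_off b (b - (c - b)) (b - k) (induced_bad c b s k bad) y ->
  exists n, (1 <= n)%nat /\
    reach f (regular_off c b s bad) (unshift b th y) (unshift b th (f' y)) n.
Proof.
  intros [Hgy Hny]. set (x := unshift b th y).
  assert (Hth : 0 <= th < 2 * b) by (destruct Hadm as [? [? ?]]; unfold th; lra).
  assert (Hyr : 0 <= y < b) by (destruct Hgy; lra).
  assert (Hxr : 0 <= x < b) by (apply unshift_range; auto).
  assert (Hbad : forall l, In x l -> In y (map rho l)).
  { intros l Hl. rewrite <- (wrap2_unshift b th y) by auto. apply (in_map rho), Hl. }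
  assert (Hxg : regular c b s x).
  { assert (x <> 0) by (intro E; apply Hny, Hbad; rewrite E; simpl; auto).
    assert (x <> b - s) by (intro E; apply Hny, Hbad; rewrite E; simpl; auto).
    destruct Hadm as [? [? ?]]. repeat split; auto; lra. }
  assert (Hxb : ~ In x bad).
  { intro E. apply Hny, Hbad. do 2 apply in_cons. apply in_or_app; auto. }
  assert (HFx : forall z, In z (b :: bad) -> f x <> z).
  { intros z Hz E. apply Hny, Hbad. do 2 apply in_cons. apply in_or_app.
    right. apply in_flat_map. exists z. split; auto. rewrite <- E. apply one_flip_preimages_spec. }
  assert (HFb : f x <> b) by (apply HFx; simpl; auto).
  rewrite (first_return_conj y Hgy Hxg HFb). unfold first_return. fold x.
  assert (HFr := one_flip_map_range c b s k x Hadm Hxg). fold f in HFr.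
  destruct (Rlt_dec (f x) b).
  - exists 1%nat. split; [lia|]. apply reach1. split; auto.
  - exists 2%nat. split; [lia|].
    apply (reach_trans _ _ _ (f x) _ 1 1); apply reach1; split; auto.
    + destruct Hadm as [? [? ?]]. repeat split; lra.
    + intro E. apply (HFx (f x)); simpl; auto.
Qed.

End RauzyStep.

Lemma one_flip_map_periodic : forall N c b s k bad,
  admissible c b s k -> c <= INR N * (c - b) ->
  exists y m, (1 <= m)%nat /\ reach (one_flip_map c b s k) (regular_off c b s bad) y y m.
Proof.
  induction N as [|N IH]; intros c b s k bad Hadm HN.
  { destruct Hadm as [[? ?] _]. simpl in HN. lra. }
  pose proof Hadm as [Hb [Hs Hk]].
  destruct (Rlt_dec (k + b) c) as [Hc|Hc].
  { apply (reflection_cycle c b s k bad (k + b) c); auto; try lra.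
    exists (k + b + c). intros x Hx. split; [|lra]. unfold one_flip_map, wrap. case_decs; lra. }
  destruct (Rlt_dec b k) as [Hbk|Hbk].
  { apply (reflection_cycle c b s k bad b k); auto; try lra.
    exists (k + b). intros x Hx. split; [|lra]. unfold one_flip_map, wrap. case_decs; lra. }
  assert (Hck : c <= k + b) by lra. assert (Hkb : k <= b) by lra.
  assert (HN' : b <= INR N * (b - (b - (c - b)))) by (rewrite S_INR in HN; lra).
  destruct (IH _ _ _ _ (induced_bad c b s k bad) (induced_admissible c b s k Hadm Hck Hkb) HN')
    as [y0 [m0 [Hm0 Hcyc]]].
  destruct (reach_cycle_lift _ _ _ _ _ y0 m0 (induced_step c b s k bad Hadm Hck Hkb) Hm0 Hcyc)
    as [n [Hn HR]].
  eauto.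
Qed.

(** * Stability of periodic orbits *)

Lemma side_radius (L : list R) x : ~ In x L -> exists d, 0 < d /\
  forall h p, Rabs h < d -> In p L -> (x < p -> x + h < p) /\ (p < x -> p < x + h).
Proof.
  induction L as [|a L IH]; intros Hx.
  - exists 1. split; [lra | intros h p _ []].
  - destruct IH as [d [Hd HL]]; [intro; apply Hx; simpl; auto|].
    assert (Ha : 0 < Rabs (x - a)) by (apply Rabs_pos_lt; intro; apply Hx; left; lra).
    exists (Rmin (Rabs (x - a)) d). split; [apply Rmin_glb_lt; auto|].
    intros h p Hh [<-|Hp].
    + assert (Rabs h < Rabs (x - a)) by (eapply Rlt_le_trans; [apply Hh | apply Rmin_l]).
      revert H. unfold Rabs. repeat destruct Rcase_abs; intros; split; intros; lra.
    + apply HL; auto. eapply Rlt_le_trans; [apply Hh | apply Rmin_r].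
Qed.

(* A nearby point follows the orbit up to a sign, so it returns after two turns. *)
Lemma cycle_stable (f : R -> R) (P : R -> Prop) y0 m :
  (forall x, P x -> P (f x) -> exists d sg, 0 < d /\ (sg = 1 \/ sg = -1) /\
     forall h, Rabs h < d -> P (x + h) /\ f (x + h) = f x + sg * h) ->
  reach f P y0 y0 m ->
  exists d, 0 < d /\ forall h, Rabs h < d -> reach f P (y0 + h) (y0 + h) (m + m).
Proof.
  intros Hloc [HP Hret].
  assert (Hsign : forall tau h, tau = 1 \/ tau = -1 -> Rabs (tau * h) = Rabs h).
  { intros tau h [-> | ->]; [f_equal; ring|]. rewrite <- Rabs_Ropp. f_equal. ring. }
  assert (Htrack : forall i, (i <= m)%nat -> exists d tau, 0 < d /\ (tau = 1 \/ tau = -1) /\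
            forall h, Rabs h < d -> reach f P (y0 + h) (Nat.iter i f y0 + tau * h) i).
  { induction i as [|i IHi]; intros Hi.
    - exists 1, 1. split; [lra|]. split; [auto|]. intros h _.
      replace (Nat.iter 0 f y0 + 1 * h) with (y0 + h) by (simpl; ring). apply reach0.
    - destruct (IHi ltac:(lia)) as [d [tau [Hd [Htau HR]]]].
      assert (Hnext : P (f (Nat.iter i f y0))).
      { change (P (Nat.iter (S i) f y0)). destruct (Nat.eq_dec (S i) m) as [E|E].
        - rewrite E, Hret. apply (HP 0%nat). lia.
        - apply HP. lia. }
      destruct (Hloc _ (HP i ltac:(lia)) Hnext) as [d' [sg [Hd' [Hsg Hl]]]].
      exists (Rmin d d'), (sg * tau). split; [apply Rmin_glb_lt; auto|].
      split; [destruct Hsg, Htau; subst; lra|].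
      intros h Hh.
      assert (Hh1 : Rabs h < d) by (eapply Rlt_le_trans; [apply Hh | apply Rmin_l]).
      assert (Hh2 : Rabs (tau * h) < d') by (rewrite Hsign; auto; eapply Rlt_le_trans; [apply Hh | apply Rmin_r]).
      destruct (Hl _ Hh2) as [HPh Hf].
      replace (S i) with (1 + i)%nat by lia.
      eapply reach_trans; [apply (HR h Hh1)|].
      replace (Nat.iter (1 + i) f y0 + sg * tau * h) with (f (Nat.iter i f y0 + tau * h))
        by (rewrite Hf; simpl; ring).
      apply reach1. exact HPh. }
  destruct (Htrack m (le_n _)) as [d [tau [Hd [Htau HR]]]].
  rewrite Hret in HR.
  exists d. split; auto. intros h Hh.
  assert (HR2 := HR (tau * h) ltac:(rewrite Hsign; auto)).
  replace (y0 + tau * (tau * h)) with (y0 + h) in HR2 by (destruct Htau as [-> | ->]; ring).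
  eapply reach_trans; [apply (HR h Hh) | exact HR2].
Qed.

Lemma one_flip_map_local_isometry c b s k e x :
  admissible c b s k -> regular_off c b s [e] x ->
  regular_off c b s [e] (one_flip_map c b s k x) ->
  exists d sg, 0 < d /\ (sg = 1 \/ sg = -1) /\ forall h, Rabs h < d ->
    regular_off c b s [e] (x + h) /\
    one_flip_map c b s k (x + h) = one_flip_map c b s k x + sg * h.
Proof.
  intros [Hb [Hs Hk]] [[Hx [Hxb Hxbs]] Hxe] [[Hy _] _].
  assert (Hxe' : x <> e) by (intro; apply Hxe; simpl; auto).
  destruct (side_radius [0; c; b; b - s; e] x) as [d1 [Hd1 Hs1]].
  { simpl. intros [E|[E|[E|[E|[E|[]]]]]]; lra. }
  destruct (side_radius [0; c] (one_flip_map c b s k x)) as [d2 [Hd2 Hs2]].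
  { simpl. intros [E|[E|[]]]; lra. }
  exists (Rmin d1 d2), (if Rlt_dec x b then 1 else -1).
  split; [apply Rmin_glb_lt; auto|]. split; [destruct Rlt_dec; auto|].
  intros h Hh.
  assert (Hh1 : Rabs h < d1) by (eapply Rlt_le_trans; [apply Hh | apply Rmin_l]).
  assert (Hh2 : Rabs h < d2) by (eapply Rlt_le_trans; [apply Hh | apply Rmin_r]).
  assert (Hh2' : Rabs (- h) < d2) by (rewrite Rabs_Ropp; auto).
  destruct (Hs1 h 0 Hh1 ltac:(simpl; tauto)) as [A1 A2].
  destruct (Hs1 h c Hh1 ltac:(simpl; tauto)) as [B1 B2].
  destruct (Hs1 h b Hh1 ltac:(simpl; tauto)) as [C1 C2].
  destruct (Hs1 h (b - s) Hh1 ltac:(simpl; tauto)) as [D1 D2].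
  destruct (Hs1 h e Hh1 ltac:(simpl; tauto)) as [E1 E2].
  destruct (Hs2 h 0 Hh2 ltac:(simpl; tauto)) as [F1 F2].
  destruct (Hs2 h c Hh2 ltac:(simpl; tauto)) as [G1 G2].
  destruct (Hs2 (- h) 0 Hh2' ltac:(simpl; tauto)) as [F1' F2'].
  destruct (Hs2 (- h) c Hh2' ltac:(simpl; tauto)) as [G1' G2'].
  split.
  - split; [repeat split; lra|]. simpl. intros [E|[]]; lra.
  - revert Hy F1 F2 G1 G2 F1' F2' G1' G2'. unfold one_flip_map, wrap. case_decs; intros;
      repeat match goal with H : ?P -> _ |- _ => first [specialize (H ltac:(lra)) | clear H] end;
      lra.
Qed.

(** * Periodic balls obstruct transitivity *)

Lemma in_orbit_sym D T p q : in_orbit D T p q -> in_orbit D T q p.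
Proof. intros [m [[H E]|[H E]]]; exists m; [right | left]; auto. Qed.

Lemma in_orbit_S1 D T p q : (forall x, D x -> in_S1 x) -> (forall x, D x -> in_S1 (T x)) ->
  in_S1 p -> in_orbit D T p q -> in_S1 q.
Proof.
  intros HD HT Hp [[|m] [[Hd E]|[Hd E]]]; subst; auto.
  - apply HT, Hd. lia.
  - apply HD, (Hd 0%nat). lia.
Qed.

Section PeriodicOrbit.
Variables (D : R -> Prop) (T : R -> R) (q : R) (M : nat).
Hypotheses (T_inj : forall x y, D x -> D y -> T x = T y -> x = y)
  (HM : (1 <= M)%nat) (Hdom : in_dom_iter D T M q) (Hq : Nat.iter M T q = q).

Definition cycle_of : list R := map (fun i => Nat.iter i T q) (seq 0 M).

Lemma iter_in_cycle_of i : (i < M)%nat -> In (Nat.iter i T q) cycle_of.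
Proof. intros. apply (in_map (fun i => Nat.iter i T q)), in_seq. lia. Qed.

Lemma in_cycle_ofP z : In z cycle_of -> exists i, (i < M)%nat /\ z = Nat.iter i T q.
Proof. intros H. apply in_map_iff in H as [i [E Hi]]. apply in_seq in Hi. exists i. split; auto; lia. Qed.

Lemma cycle_of_fwd z : In z cycle_of -> D z /\ In (T z) cycle_of.
Proof.
  intros H. destruct (in_cycle_ofP z H) as [i [Hi ->]]. split; [apply Hdom; auto|].
  change (In (Nat.iter (S i) T q) cycle_of). destruct (Nat.eq_dec (S i) M) as [E|E].
  - rewrite E, Hq. apply (iter_in_cycle_of 0). lia.
  - apply iter_in_cycle_of. lia.
Qed.

Lemma cycle_of_back z : D z -> In (T z) cycle_of -> In z cycle_of.
Proof.
  intros Hz H. destruct (in_cycle_ofP _ H) as [[|i] [Hi E]].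
  - simpl in E. rewrite <- Hq in E. replace M with (S (M - 1)) in E by lia. simpl in E.
    apply T_inj in E; auto; [|apply Hdom; lia]. rewrite E. apply iter_in_cycle_of. lia.
  - simpl in E. apply T_inj in E; auto; [|apply Hdom; lia]. rewrite E. apply iter_in_cycle_of. lia.
Qed.

Lemma in_orbit_cycle_of p z : In p cycle_of -> in_orbit D T p z -> In z cycle_of.
Proof.
  intros Hp [n [[Hd ->]|[Hd E]]].
  - induction n; auto. apply cycle_of_fwd, IHn. intros i Hi. apply Hd. lia.
  - subst p. revert z Hd Hp. induction n; intros z Hd Hp; auto.
    apply cycle_of_back; [apply (Hd 0%nat); lia|]. apply IHn.
    + intros i Hi. rewrite <- Nat.iter_succ_r. apply Hd. lia.
    + rewrite <- Nat.iter_succ_r. auto.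
Qed.

End PeriodicOrbit.

Lemma finite_set_not_dense (C : list R) : (forall z, In z C -> in_S1 z) ->
  exists x e, in_S1 x /\ 0 < e /\ forall z, In z C -> e <= cdist x z.
Proof.
  intros HC. destruct (exists_notin_between C 0 1 ltac:(lra)) as [x [Hx Hn]].
  exists x, (fold_right (fun z acc => Rmin (cdist x z) acc) 1 C).
  split; [unfold in_S1; lra|].
  revert HC Hn. induction C as [|a C IH]; intros HC Hn; simpl; [split; [lra | tauto]|].
  destruct IH as [IH1 IH2]; [intros z Hz; apply HC; simpl; auto | intro; apply Hn; simpl; auto|].
  split.
  - apply Rmin_glb_lt; auto. apply cdist_pos; [unfold in_S1; lra | apply HC; simpl; auto|].
    intro E; apply Hn; simpl; auto.
  - intros z [<-|Hz]; [apply Rmin_l|]. eapply Rle_trans; [apply Rmin_r | auto].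
Qed.

(* A dense orbit would enter the ball, hence be one of its finite cycles. *)
Lemma not_transitive_of_periodic_ball (D : R -> Prop) (T : R -> R) x0 d :
  (forall x, D x -> in_S1 x) -> (forall x, D x -> in_S1 (T x)) ->
  (forall x y, D x -> D y -> T x = T y -> x = y) ->
  in_S1 x0 -> 0 < d ->
  (forall q, in_S1 q -> cdist x0 q < d ->
     exists M, (1 <= M)%nat /\ in_dom_iter D T M q /\ Nat.iter M T q = q) ->
  ~ transitive D T.
Proof.
  intros HD HT Hinj Hx0 Hd Hper [p [Hp Hdense]].
  destruct (Hdense x0 d Hx0 Hd) as [q [Hpq Hq]].
  assert (HqS := in_orbit_S1 D T p q HD HT Hp Hpq).
  destruct (Hper q HqS Hq) as [M [HM [Hdom Hret]]].
  assert (Hcyc := in_orbit_cycle_of D T q M Hinj HM Hdom Hret).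
  assert (Hpc : In p (cycle_of T q M)).
  { apply (Hcyc q); [apply (iter_in_cycle_of T q M HM 0); lia | apply in_orbit_sym; auto]. }
  destruct (finite_set_not_dense (cycle_of T q M)) as [x [e [Hx [He Hfar]]]].
  { intros z Hz. apply HD, (cycle_of_fwd D T q M HM Hdom Hret z Hz). }
  destruct (Hdense x e Hx He) as [z [Hpz Hz]].
  specialize (Hfar z (Hcyc p z Hpc Hpz)). lra.
Qed.

(** * Reduction of a 3-CET with one flip to the model map *)

Lemma reach_semiconj (f h : R -> R) (P D : R -> Prop) (T : R -> R) y z n :
  (forall w, P w -> D (h w) /\ T (h w) = h (f w)) ->
  reach f P y z n -> in_dom_iter D T n (h y) /\ Nat.iter n T (h y) = h z.
Proof.
  intros H [HP Hz].
  assert (Hi : forall i, (i <= n)%nat -> Nat.iter i T (h y) = h (Nat.iter i f y)).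
  { induction i; intros Hi; [reflexivity|]. simpl. rewrite IHi by lia.
    apply (H _ (HP i ltac:(lia))). }
  split.
  - intros i Hin. rewrite Hi by lia. apply (H _ (HP i Hin)).
  - rewrite Hi, Hz by lia. reflexivity.
Qed.

Lemma rotation_image (T : R -> R) a l r z :
  (forall t, 0 < t < l -> T (modone (a + t)) = modone (a + t + r)) ->
  arc (a + r) l z -> exists x, arc a l x /\ T x = z.
Proof.
  intros H [t [Ht ->]]. exists (modone (a + t)). split; [exists t; auto|].
  rewrite H by auto. f_equal. ring.
Qed.

Lemma flip_image (T : R -> R) a l cc z :
  (forall t, 0 < t < l -> T (modone (a + t)) = modone (cc - t)) ->
  arc (cc - l) l z -> exists x, arc a l x /\ T x = z.
Proof.
  intros H [t [Ht ->]]. exists (modone (a + (l - t))). split; [exists (l - t); split; auto; lra|].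
  rewrite H by lra. f_equal. ring.
Qed.

Lemma image_arcs_disjoint (D : R -> Prop) (T : R -> R) a1 l1 a2 l2 u1 u2 :
  (forall x y, D x -> D y -> T x = T y -> x = y) ->
  (forall x, arc a1 l1 x -> D x) -> (forall x, arc a2 l2 x -> D x) ->
  arcs_disjoint a1 l1 a2 l2 ->
  (forall z, arc u1 l1 z -> exists x, arc a1 l1 x /\ T x = z) ->
  (forall z, arc u2 l2 z -> exists x, arc a2 l2 x /\ T x = z) ->
  arcs_disjoint u1 l1 u2 l2.
Proof.
  intros Hinj HD1 HD2 Hd I1 I2 z Z1 Z2.
  destruct (I1 z Z1) as [x [Hx <-]]. destruct (I2 _ Z2) as [y [Hy E]].
  assert (x = y) by (apply Hinj; auto). subst y. eapply Hd; eauto.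
Qed.

Section ConsecutiveArcs.
Variables (D : R -> Prop) (T : R -> R) (aj lj a1 l1 a2 l2 cc r1 r2 : R).
Hypotheses (Hlj : 0 < lj) (Hl1 : 0 < l1) (Hl2 : 0 < l2) (Hsum : lj + l1 + l2 = 1)
  (E1 : eqm a1 (aj + lj)) (E2 : eqm a2 (a1 + l1))
  (HD : forall x, D x <-> arc aj lj x \/ arc a1 l1 x \/ arc a2 l2 x)
  (HTS : forall x, D x -> in_S1 (T x))
  (Hinj : forall x y, D x -> D y -> T x = T y -> x = y)
  (Hfl : forall t, 0 < t < lj -> T (modone (aj + t)) = modone (cc - t))
  (Hr1 : forall t, 0 < t < l1 -> T (modone (a1 + t)) = modone (a1 + t + r1))
  (Hr2 : forall t, 0 < t < l2 -> T (modone (a2 + t)) = modone (a2 + t + r2)).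

(* The flipped arc is sent to the arc ending at [cc]; the images of the two
   rotated arcs follow it in one order ([s = 0]) or the other ([s = l2]). *)
Let images_after_flip s :=
  (s = 0 /\ eqm (a1 + r1) cc /\ eqm (a2 + r2) (cc + l1)) \/
  (s = l2 /\ eqm (a2 + r2) cc /\ eqm (a1 + r1) (cc + l2)).

Let k := modone (cc - a1).
Let h y := modone (a1 + y).

Lemma one_flip_map_conj s : images_after_flip s -> forall y, regular_off 1 (l1 + l2) s [l1] y ->
  D (h y) /\ T (h y) = h (one_flip_map 1 (l1 + l2) s k y).
Proof.
  intros Htile y [[Hy [Hy1 Hy2]] Hne].
  assert (Hne' : y <> l1) by (intro; apply Hne; simpl; auto).
  assert (Rk := modone_range (cc - a1)). fold k in Rk.
  destruct (modone_eqm (cc - a1)) as [zk Hzk]. fold k in Hzk.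
  destruct E1 as [z1 Hz1]. destruct E2 as [z2 Hz2]. unfold h.
  destruct (Rlt_dec y l1) as [Ha|Ha]; [|destruct (Rlt_dec y (l1 + l2)) as [Hb|Hb]].
  - split; [apply HD; right; left; exists y; split; auto; lra|].
    rewrite Hr1 by lra. apply modone_eqm_eq.
    unfold one_flip_map, wrap. destruct Htile as [[Hs [[p Hp] [q Hq]]]|[Hs [[p Hp] [q Hq]]]];
      subst s; case_decs; try lra;
      replace (a1 + y + r1) with ((a1 + r1) + y) by ring; rewrite ?Hp, ?Hq, Hzk; solve_eqm.
  - assert (Eh : modone (a1 + y) = modone (a2 + (y - l1)))
      by (apply modone_eqm_eq; rewrite Hz2; solve_eqm).
    split; [apply HD; right; right; rewrite Eh; exists (y - l1); split; auto; lra|].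
    rewrite Eh, Hr2 by lra. apply modone_eqm_eq.
    unfold one_flip_map, wrap. destruct Htile as [[Hs [[p Hp] [q Hq]]]|[Hs [[p Hp] [q Hq]]]];
      subst s; case_decs; try lra;
      replace (a2 + (y - l1) + r2) with ((a2 + r2) + (y - l1)) by ring; rewrite ?Hp, ?Hq, Hzk; solve_eqm.
  - assert (Eh : modone (a1 + y) = modone (aj + (y - (l1 + l2)))).
    { apply modone_eqm_eq. rewrite Hz1. replace lj with (1 - l1 - l2) by lra. solve_eqm. }
    split; [apply HD; left; rewrite Eh; exists (y - (l1 + l2)); split; auto; lra|].
    rewrite Eh, Hfl by lra. apply modone_eqm_eq.
    unfold one_flip_map, wrap. destruct Htile as [[Hs _]|[Hs _]]; subst s; case_decs; try lra;
      rewrite Hzk; solve_eqm.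
Qed.

Lemma consecutive_periodic_not_transitive s : images_after_flip s ->
  has_periodic_point D T /\ ~ transitive D T.
Proof.
  intros Htile. set (b := l1 + l2).
  assert (Hadm : admissible 1 b s k).
  { pose proof (modone_range (cc - a1)). unfold admissible, b, k. destruct Htile as [[-> _]|[-> _]]; lra. }
  assert (Hconj := one_flip_map_conj s Htile). fold b in Hconj.
  destruct (INR_unbounded (1 / lj)) as [N HN].
  assert (HN' : 1 <= INR N * (1 - b)).
  { replace (1 - b) with lj by (unfold b; lra).
    apply (Rmult_lt_compat_r lj) in HN; [|lra].
    replace (1 / lj * lj) with 1 in HN by (field; lra). lra. }
  destruct (one_flip_map_periodic N 1 b s k [l1] Hadm HN') as [y0 [m [Hm Hcyc]]].
  destruct (cycle_stable _ _ y0 m (fun x => one_flip_map_local_isometry 1 b s k l1 x Hadm) Hcyc)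
    as [d [Hd Hnear]].
  split.
  - destruct (reach_semiconj _ h _ D T _ _ _ Hconj Hcyc) as [Hdom Hret].
    exists (h y0), m. auto.
  - apply (not_transitive_of_periodic_ball D T (h y0) d); auto using modone_range.
    + intros x Hx. apply HD in Hx as [A|[A|A]]; eapply arc_in_S1; eauto.
    + apply modone_range.
    + intros q Hq Hdq. destruct (cdist_lt _ _ _ Hdq) as [dd [Hdd Eq]].
      assert (Eqh : q = h (y0 + dd)).
      { unfold h in *. rewrite <- (modone_id q) by auto. apply modone_eqm_eq.
        eapply eqm_trans; [apply Eq|]. destruct (modone_eqm (a1 + y0)) as [z Hz]. exists z. lra. }
      exists (m + m)%nat. rewrite Eqh. split; [lia|].
      apply (reach_semiconj _ h _ D T _ _ _ Hconj (Hnear dd Hdd)).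
Qed.

Lemma consecutive_one_flip :
  arcs_disjoint aj lj a1 l1 -> arcs_disjoint aj lj a2 l2 -> arcs_disjoint a1 l1 a2 l2 ->
  has_periodic_point D T /\ ~ transitive D T.
Proof.
  intros Dj1 Dj2 D12.
  assert (Hj : forall x, arc aj lj x -> D x) by (intros; apply HD; auto).
  assert (H1 : forall x, arc a1 l1 x -> D x) by (intros; apply HD; auto).
  assert (H2 : forall x, arc a2 l2 x -> D x) by (intros; apply HD; auto).
  assert (IJ := flip_image T aj lj cc). assert (I1 := rotation_image T a1 l1 r1).
  assert (I2 := rotation_image T a2 l2 r2).
  destruct (disjoint3_adjacent (cc - lj) lj (a1 + r1) l1 (a2 + r2) l2) as [[A B]|[A B]];
    auto; try (eapply image_arcs_disjoint; eauto).
  - apply (consecutive_periodic_not_transitive 0). left.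
    split; [auto|]. split; (eapply eqm_trans; [eauto | apply eqm_of_eq; ring]).
  - apply (consecutive_periodic_not_transitive l2). right.
    split; [auto|]. split; (eapply eqm_trans; [eauto | apply eqm_of_eq; ring]).
Qed.

End ConsecutiveArcs.

Lemma three_arcs_one_flip (D : R -> Prop) (T : R -> R) aj lj ap lp aq lq :
  0 < lj <= 1 -> 0 < lp <= 1 -> 0 < lq <= 1 ->
  arcs_disjoint aj lj ap lp -> arcs_disjoint aj lj aq lq -> arcs_disjoint ap lp aq lq ->
  arcs_cover3 aj lj ap lp aq lq ->
  (forall x, D x <-> arc aj lj x \/ arc ap lp x \/ arc aq lq x) ->
  (forall x, D x -> in_S1 (T x)) ->
  (forall x y, D x -> D y -> T x = T y -> x = y) ->
  (forall x y, arc ap lp x -> arc ap lp y -> cdist (T x) (T y) = cdist x y) ->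
  (forall x y, arc aq lq x -> arc aq lq y -> cdist (T x) (T y) = cdist x y) ->
  is_flip aj lj T -> ~ is_flip ap lp T -> ~ is_flip aq lq T ->
  has_periodic_point D T /\ ~ transitive D T.
Proof.
  intros Hlj Hlp Hlq Djp Djq Dpq Cv HD HTS Hinj Ip Iq [cc Hfl] Np Nq.
  destruct (cover3_adjacent aj lj ap lp aq lq) as [Hsum Hord]; auto.
  assert (Sp : forall x, arc ap lp x -> in_S1 (T x)) by (intros x Hx; apply HTS, HD; auto).
  assert (Sq : forall x, arc aq lq x -> in_S1 (T x)) by (intros x Hx; apply HTS, HD; auto).
  destruct (arc_isometry_cases ap lp T Sp Ip) as [[rp Hrp]|]; [|contradiction].
  destruct (arc_isometry_cases aq lq T Sq Iq) as [[rq Hrq]|]; [|contradiction].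
  destruct Hord as [[A B]|[A B]].
  - apply (consecutive_one_flip D T aj lj ap lp aq lq cc rp rq); auto; lra.
  - apply (consecutive_one_flip D T aj lj aq lq ap lp cc rq rp); auto using arcs_disjoint_sym; try lra.
    intros x. rewrite HD. tauto.
Qed.

Lemma cet3_one_flip_pieces (D : R -> Prop) (T : R -> R) a l (j p q : nat) :
  CET_pieces 3 a l D T ->
  (forall i, (i < 3)%nat <-> i = j \/ i = p \/ i = q) -> j <> p -> j <> q -> p <> q ->
  is_flip (a j) (l j) T -> (forall i, (i < 3)%nat -> is_flip (a i) (l i) T -> i = j) ->
  has_periodic_point D T /\ ~ transitive D T.
Proof.
  intros [Hrng [Hdisj [Hcov [HDeq [HTS [Hinj [Hiso _]]]]]]] Hidx Hjp Hjq Hpq Hfl Hun.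
  assert (Hj : (j < 3)%nat) by (apply Hidx; auto).
  assert (Hp : (p < 3)%nat) by (apply Hidx; auto).
  assert (Hq : (q < 3)%nat) by (apply Hidx; auto).
  apply (three_arcs_one_flip D T (a j) (l j) (a p) (l p) (a q) (l q)); auto.
  - apply Hrng; auto.
  - apply Hrng; auto.
  - apply Hrng; auto.
  - intros x A B. apply (Hdisj j p x); auto.
  - intros x A B. apply (Hdisj j q x); auto.
  - intros x A B. apply (Hdisj p q x); auto.
  - intros x Hx. destruct (Hcov x Hx) as [i [Hi C]].
    destruct (proj1 (Hidx i) Hi) as [-> | [-> | ->]]; tauto.
  - intros x. rewrite HDeq. split.
    + intros [i [Hi A]]. destruct (proj1 (Hidx i) Hi) as [-> | [-> | ->]]; tauto.
    + intros [A|[A|A]]; eauto.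
  - intros x y. apply Hiso; auto.
  - intros x y. apply Hiso; auto.
  - intros Hf. apply Hjp. symmetry. apply Hun; auto.
  - intros Hf. apply Hjq. symmetry. apply Hun; auto.
Qed.

Theorem theorem3p1 :
  forall (D : R -> Prop) (T : R -> R),
    CET_one_flip 3 D T -> has_periodic_point D T /\ ~ transitive D T.
Proof.
  intros D T [a [l [Hpieces [j [Hj [Hfl Hun]]]]]].
  destruct j as [|[|[|j]]]; [| | | lia].
  - apply (cet3_one_flip_pieces D T a l 0 1 2); auto; intros; lia.
  - apply (cet3_one_flip_pieces D T a l 1 0 2); auto; intros; lia.
  - apply (cet3_one_flip_pieces D T a l 2 0 1); auto; intros; lia.
Qed.
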